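(* For DEMO on the weighted vertex cover problem, the search point $0^n$ is included in the population in expected time $O\big(n^3(\log n+\log W_{max})^2\big)$, where $W_{max}$ is the maximum vertex weight.
   Context: Weighted vertex cover: $G=(V,E)$, $V=\{v_1,\dots,v_n\}$, $w:V\to\mathbb{N}^+$. Search points $x\in\{0,1\}^n$; $Cost(x)=\sum_i w(v_i)x_i$; $G(x)=(V(x),E(x))$ with $V(x)=V\setminus\{v_i:x_i=1\}$, $E(x)$ = edges with no selected endpoint; $LP(x)$ = optimal value of: minimize $\sum_{v_i\in V(x)}w(v_i)y_i$ s.t. $y_i+y_j\ge1$ for $\{v_i,v_j\}\in E(x)$, $0\le y_i\le1$. $f(x)=(Cost(x),LP(x))$, $f(x)\le f(y)$ componentwise. DEMO: $\delta=\frac1{2n}$, $b_1(x)=\lceil\log_{1+\delta}(1+Cost(x))\rceil$, $b_2(x)=\lceil\log_{1+\delta}(1+LP(x))\rceil$, $b=(b_1,b_2)$. Start with uniformly random $x$, $P=\{x\}$. Each iteration: choose $x\in P$ uniformly; create $x'$ by flipping each bit independently with probability $1/n$; if some $y\in P$ satisfies ($f(y)\le f(x')$ and $f(y)\ne f(x')$) or ($b(y)=b(x')$ and $Cost(y)+2LP(y)\le Cost(x')+2LP(x')$), discard $x'$; otherwise add $x'$ and delete all other $z\in P$ with $f(x')\le f(z)$ or $b(z)=b(x')$. Time = number of iterations. *)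

From HB Require Import structures.
From mathcomp Require Import all_boot all_order all_algebra.
From mathcomp Require Import all_classical all_reals all_analysis.
Set Implicit Arguments. Unset Strict Implicit. Unset Printing Implicit Defensive.
Import Order.TTheory GRing.Theory Num.Theory.
Local Open Scope ring_scope.
Local Open Scope classical_set_scope.

(* Search points: bit strings of length n, x i = 1 iff vertex v_i selected. *)
Definition bits (n : nat) := {ffun 'I_n -> bool}.
Definition pop (n : nat) := {set bits n}.

Section DEMO.
Context {R : realType} (n : nat) (E : rel 'I_n) (w : 'I_n -> nat).

Definition Cost (x : bits n) : nat := (\sum_(i < n) w i * x i)%N.

(* Feasible solutions of the LP relaxation on the residual graph G(x):
   variables y_i for v_i in V(x) (values on selected vertices are irrelevant),
   0 <= y_i <= 1, and y_i + y_j >= 1 for every edge with no selected endpoint. *)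
Definition LP_feasible (x : bits n) (y : 'I_n -> R) : Prop :=
  (forall i, ~~ x i -> 0 <= y i <= 1) /\
  (forall i j, E i j -> ~~ x i -> ~~ x j -> 1 <= y i + y j).

Definition LP_obj (x : bits n) (y : 'I_n -> R) : R :=
  \sum_(i < n | ~~ x i) (w i)%:R * y i.

Definition LP (x : bits n) : R :=
  inf [set v | exists y, LP_feasible x y /\ v = LP_obj x y].

Definition f_le (x y : bits n) : bool :=
  (Cost x <= Cost y)%N && (LP x <= LP y).
Definition f_neq (x y : bits n) : bool :=
  (Cost x != Cost y) || (LP x != LP y).

Definition delta : R := (2 * n%:R)^-1.
Definition logd (a : R) : R := ln a / ln (1 + delta).
Definition b1 (x : bits n) : int := Num.ceil (logd (1 + (Cost x)%:R)).
Definition b2 (x : bits n) : int := Num.ceil (logd (1 + LP x)).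
Definition b (x : bits n) : int * int := (b1 x, b2 x).

Definition score (x : bits n) : R := (Cost x)%:R + 2 * LP x.

Definition discarded (P : pop n) (x' : bits n) : bool :=
  [exists y in P, (f_le y x' && f_neq y x') ||
                  ((b y == b x') && (score y <= score x'))].

Definition demo_step (P : pop n) (x' : bits n) : pop n :=
  if discarded P x' then P
  else x' |: [set z in P | ~~ (f_le x' z || (b z == b x'))].

Definition mut_prob (x x' : bits n) : R :=
  \prod_(i < n) (if x i == x' i then 1 - n%:R^-1 else n%:R^-1).

(* transition probability of one iteration: choose x in P uniformly,
   mutate, apply the selection step *)
Definition trans (P P' : pop n) : R :=
  \sum_(x in P) (#|P|%:R^-1 *
     \sum_(x' : bits n) mut_prob x x' * (demo_step P x' == P')%:R).

Definition init (P : pop n) : R :=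
  \sum_(x : bits n) (2 ^+ n)^-1 * (P == [set x]%SET)%:R.

Definition zero_bits : bits n := [ffun => false].

(* killed distribution: q t P = Pr[population after t iterations is P and
   0^n was not in the population at any of the times 0..t] *)
Fixpoint q (t : nat) (P : pop n) : R :=
  (zero_bits \notin P)%:R *
  match t with
  | 0 => init P
  | t'.+1 => \sum_(P0 : pop n) q t' P0 * trans P0 P
  end.

(* Pr[T > t], T = number of iterations until 0^n is in the population *)
Definition tail_prob (t : nat) : R := \sum_(P : pop n) q t P.

(* E[T] = sum_{t >= 0} Pr[T > t] (in the extended reals) *)
Definition expected_time : \bar R := (\sum_(0 <= t <oo) (tail_prob t)%:E)%E.

End DEMO.

Definition simple_graph (n : nat) (E : rel 'I_n) : Prop :=
  (forall i j, E i j = E j i) /\ (forall i, ~~ E i i).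

From Pilot Require Import Defs.
From mathcomp Require Import all_boot all_order all_algebra.
From mathcomp Require Import all_classical all_reals all_analysis.
From mathcomp Require Import ring lra zify.
Set Implicit Arguments.
Unset Strict Implicit.
Unset Printing Implicit Defensive.
Import Order.TTheory GRing.Theory Num.Theory.
Local Open Scope ring_scope.

(* The potential of a population is the box index [b1] of its cheapest point.
   It never increases: the cheapest point can only be removed by an offspring
   that costs no more or lies in the same box.  While [0^n] is missing,
   choosing the cheapest point (probability [1/#|P| >= 1/(2K+1)], because the
   diagonal index [b1 - b2] is injective on a population and both box indices
   lie between 0 and K) and flipping exactly its heaviest selected vertex
   (probability at least [1/(e n)]) removes at least a [1/n] fraction of its
   cost, hence lowers the potential.  Additive drift then bounds the expected
   time by [e n K (2K+1)], where [K = O(n (log n + log W_max))] is the number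
   of cost boxes. *)

Section AdditiveDrift.
Variable R : realType.

Lemma nneseries_le_potential (u phi : nat -> R) :
  (forall t, 0 <= u t) -> (forall t, 0 <= phi t) ->
  (forall t, phi t.+1 <= phi t - u t) ->
  (\sum_(0 <= t <oo) (u t)%:E <= (phi 0%N)%:E)%E.
Proof.
move=> u_ge0 phi_ge0 phi_succ_le.
have partial_le T : \sum_(0 <= t < T) u t <= phi 0%N - phi T.
  elim: T => [|T IH]; first by rewrite big_geq // subrr.
  by rewrite big_nat_recr //=; have := phi_succ_le T; lra.
apply: lime_le; first by apply: is_cvg_nneseries => t _ _; rewrite lee_fin.
apply: nearW => T; rewrite sumEFin lee_fin.
by apply: le_trans (partial_le T) _; rewrite lerBlDr lerDl.
Qed.

Variables (S : finType) (p : nat -> S -> R) (T : S -> S -> R) (H : S -> R).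
Hypothesis p_ge0 : forall t s, 0 <= p t s.
Hypothesis H_ge0 : forall s, 0 <= H s.
Hypothesis p_succ_le : forall t s', p t.+1 s' <= \sum_s p t s * T s s'.
Hypothesis drift : forall t s, p t s != 0 -> \sum_s' T s s' * H s' <= H s - 1.

Lemma potential_succ_le t :
  \sum_s p t.+1 s * H s <= \sum_s p t s * H s - \sum_s p t s.
Proof.
apply: (@le_trans _ _ (\sum_s p t s * \sum_s' T s s' * H s')).
  apply: (@le_trans _ _ (\sum_s' (\sum_s p t s * T s s') * H s')).
    by apply: ler_sum => s' _; rewrite ler_wpM2r.
  rewrite (eq_bigr (fun s' => \sum_s p t s * (T s s' * H s'))); last first.
    by move=> s' _; rewrite big_distrl; apply: eq_bigr => s _; rewrite mulrA.
  by rewrite exchange_big; apply: ler_sum => s _; rewrite big_distrr.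
rewrite -sumrB; apply: ler_sum => s _.
have [->|pt_neq0] := eqVneq (p t s) 0; first by rewrite !mul0r subrr.
rewrite -[X in _ <= _ - X]mulr1 -mulrBr.
by apply: ler_wpM2l; [exact: p_ge0 | exact: drift pt_neq0].
Qed.

Lemma killed_chain_series_le :
  (\sum_(0 <= t <oo) (\sum_s p t s)%:E <= (\sum_s p 0%N s * H s)%:E)%E.
Proof.
apply: (@nneseries_le_potential _ (fun t => \sum_s p t s * H s)) => t.
- exact: sumr_ge0.
- by apply: sumr_ge0 => s _; rewrite mulr_ge0.
- exact: potential_succ_le.
Qed.

End AdditiveDrift.

Section Averages.
Variables (R : realType) (I : finType) (p f : I -> R) (F : R).
Hypothesis p_ge0 : forall i, 0 <= p i.
Hypothesis p_sum1 : \sum_i p i = 1.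
Hypothesis f_le : forall i, f i <= F.

Lemma average_le : \sum_i p i * f i <= F.
Proof.
rewrite -[X in _ <= X]mul1r -p_sum1 big_distrl /=.
by apply: ler_sum => i _; apply: ler_wpM2l.
Qed.

Lemma average_le_drop i0 d : f i0 <= F - d -> \sum_i p i * f i <= F - p i0 * d.
Proof.
move=> f_i0_le; rewrite (bigD1 i0) //=.
have rest_le : \sum_(i | i != i0) p i * f i <= (1 - p i0) * F.
  rewrite -p_sum1 [\sum_i p i](bigD1 i0) //= [p i0 + _]addrC addrK big_distrl /=.
  by apply: ler_sum => i _; apply: ler_wpM2l.
have := ler_wpM2l (p_ge0 i0) f_i0_le; lra.
Qed.

End Averages.

Definition flip {n : nat} (x : bits n) (i : 'I_n) : bits n :=
  [ffun j => (j == i) (+) x j].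

Section Mutation.
Context {R : realType} (n : nat).

Definition single_flip_prob : R := n%:R^-1 * (1 - n%:R^-1) ^+ n.-1.

Lemma subr_ninv_ge0 : 0 <= 1 - n%:R^-1 :> R.
Proof. by case: n => [|m]; rewrite ?invr0 ?subr0 // subr_ge0 invf_le1 ?ler1n ?ltr0n. Qed.

Lemma mut_prob_ge0 (x x' : bits n) : 0 <= mut_prob (R:=R) x x'.
Proof.
apply: prodr_ge0 => i _; case: ifP => _; first exact: subr_ninv_ge0.
by rewrite invr_ge0 ler0n.
Qed.

Lemma sum_mut_prob (x : bits n) : \sum_x' mut_prob (R:=R) x x' = 1.
Proof.
rewrite /mut_prob -(bigA_distr_bigA (fun i (bi : bool) =>
  if x i == bi then 1 - n%:R^-1 else n%:R^-1 : R)).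
by apply: big1 => i _; rewrite big_bool /=; case: (x i); rewrite /= ?subrK // addrC subrK.
Qed.

Lemma mut_prob_flip (x : bits n) i : mut_prob (R:=R) x (flip x i) = single_flip_prob.
Proof.
rewrite /mut_prob (bigD1 i) //= ffunE eqxx (_ : (x i == _) = false); last by case: (x i).
rewrite (eq_bigr (fun _ => 1 - n%:R^-1)); last first.
  by move=> j /negbTE j_neq_i; rewrite ffunE j_neq_i eqxx.
by rewrite prodr_const cardC1 card_ord.
Qed.

Hypothesis n_gt1 : (1 < n)%N.

Lemma single_flip_prob_gt0 : 0 < single_flip_prob.
Proof.
have n_pos : 0 < n%:R :> R by rewrite ltr0n ltnW.
rewrite mulr_gt0 ?invr_gt0 ?exprn_gt0 // subr_gt0 invf_lt1 //.
by rewrite ltr1n.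
Qed.

(* [(1 - 1/n)^-1 = 1 + 1/(n-1)] and [(1 + 1/m)^m <= e] *)
Lemma single_flip_prob_inv_le : single_flip_prob^-1 <= expR 1 * n%:R.
Proof.
rewrite /single_flip_prob; case: n n_gt1 => [//|m]; rewrite ltnS => m_gt0 /=.
have m_pos : 0 < m%:R :> R by rewrite ltr0n.
have inv_subr : (1 - m.+1%:R^-1)^-1 = 1 + m%:R^-1 :> R.
  by rewrite -addn1 natrD; field; rewrite !lt0r_neq0 //; lra.
have pow_le : (1 + m%:R^-1) ^+ m <= expR 1 :> R.
  apply: (@le_trans _ _ (expR (m%:R^-1) ^+ m)).
    by rewrite lerXn2r ?nnegrE ?expR_ge0 ?expR_ge1Dx //; lra.
  by rewrite -expRM_natl mulfV // lt0r_neq0.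
by rewrite invfM invrK -exprVn inv_subr mulrC ler_pM2r ?ltr0n.
Qed.

End Mutation.

Section Boxes.
Context {R : realType} (n : nat).
Hypothesis n_gt0 : (0 < n)%N.

Definition box (a : R) : int := Num.ceil (logd n (1 + a)).

Lemma ln_ge1 (x : R) : expR 1 <= x -> 1 <= ln x.
Proof.
move=> e_le_x; rewrite -[X in X <= _](expRK 1) ler_ln ?posrE ?expR_gt0 //.
exact: lt_le_trans (expR_gt0 1) e_le_x.
Qed.

Lemma delta_gt0 : 0 < delta n :> R.
Proof. by rewrite invr_gt0 mulr_gt0 ?ltr0n. Qed.

Lemma ln1Ddelta_gt0 : 0 < ln (1 + delta n) :> R.
Proof. by rewrite ln_gt0 // ltrDl delta_gt0. Qed.

(* [ln (1 + d) >= d / (1 + d) >= d / 2] with [d = 1 / (2 n) <= 1] *)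
Lemma ln1Ddelta_ge : (4 * n%:R)^-1 <= ln (1 + delta n) :> R.
Proof.
have d_gt0 := delta_gt0; set d := delta n in d_gt0 *.
have n_pos : 0 < n%:R :> R by rewrite ltr0n.
have dn : d * (2 * n%:R) = 1 by rewrite mulVf // lt0r_neq0 // mulr_gt0.
have n_ge1 : 1 <= n%:R :> R by rewrite ler1n.
have d_le1 : d <= 1 by nra.
have ln_ge : d / (1 + d) <= ln (1 + d).
  have := @le_ln1Dx R (- (d / (1 + d))).
  have -> : 1 - d / (1 + d) = (1 + d)^-1 by field; lra.
  rewrite lnV ?posrE; last by lra.
  by rewrite lerN2 => -> //; rewrite ltrN2 ltr_pdivrMr; lra.
apply: le_trans ln_ge.
have -> : (4 * n%:R)^-1 = d / 2 by rewrite /d /delta; field; rewrite lt0r_neq0.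
by rewrite ler_pM2l // lef_pV2 ?posrE; lra.
Qed.

Lemma logd_ge0 (a : R) : 1 <= a -> 0 <= logd n a.
Proof. by move=> a_ge1; apply: divr_ge0; [exact: ln_ge0 | exact: ltW ln1Ddelta_gt0]. Qed.

Lemma ler_logd (a a' : R) : 0 < a -> a <= a' -> logd n a <= logd n a'.
Proof.
move=> a_gt0 le_aa'; rewrite ler_pM2r ?invr_gt0 ?ln1Ddelta_gt0 //.
by rewrite ler_ln ?posrE // (lt_le_trans a_gt0).
Qed.

Lemma logdM1Ddelta (a : R) : 0 < a -> logd n ((1 + delta n) * a) = 1 + logd n a.
Proof.
move=> a_gt0; have := ln1Ddelta_gt0 => L_gt0.
rewrite /logd lnM ?posrE ?mulrDl ?divff ?lt0r_neq0 //.
by rewrite addr_gt0 ?delta_gt0.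
Qed.

Lemma logd_le (a : R) : 1 <= a -> logd n a <= 4 * n%:R * ln a.
Proof.
move=> a_ge1; rewrite /logd mulrC ler_pdivrMl ?ln1Ddelta_gt0 //.
rewrite mulrA -[X in X <= _]mul1r ler_wpM2r ?ln_ge0 //.
by rewrite -ler_pdivrMr ?mul1r ?ln1Ddelta_ge // mulr_gt0 ?ltr0n.
Qed.

Lemma box_ge0 (a : R) : 0 <= a -> 0 <= box a.
Proof.
move=> a_ge0; have := @logd_ge0 (1 + a); rewrite lerDl => /(_ a_ge0).
by rewrite /box ceil_ge0; lra.
Qed.

Lemma le_box (a a' : R) : 0 <= a -> a <= a' -> box a <= box a'.
Proof. by move=> a_ge0 le_aa'; rewrite le_ceil // ler_logd ?lerD2l //; lra. Qed.

Lemma box_lt (a a' : R) : 0 <= a -> (1 + delta n) * (1 + a) <= 1 + a' -> box a < box a'.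
Proof.
move=> a_ge0 le_a'; have a1_gt0 : 0 < 1 + a by lra.
rewrite /box -lezD1 -[X in _ + X <= _](ceil1 R) -ceilDrz ?rpred1 // le_ceil //.
by rewrite addrC -logdM1Ddelta // ler_logd // mulr_gt0 // addr_gt0 ?delta_gt0.
Qed.

Lemma box_lt_logd (a : R) : (box a)%:~R < logd n (1 + a) + 1.
Proof. by have := ceilB1_lt (logd n (1 + a)); rewrite /box rmorphB /=; lra. Qed.

Lemma box_subn_lt (c v : nat) :
  (0 < v)%N -> (v <= c)%N -> (c <= n * v)%N -> box (c - v)%:R < box c%:R.
Proof.
move=> v_gt0 le_vc le_c_nv; apply: box_lt; rewrite ?ler0n // natrB //.
have v_ge1 : 1 <= v%:R :> R by rewrite ler1n.
have c_le : c%:R <= n%:R * v%:R :> R by rewrite -natrM ler_nat.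
have dn : delta n * (2 * n%:R) = 1 :> R by rewrite mulVf // lt0r_neq0 // mulr_gt0 ?ltr0n.
have := delta_gt0; nra.
Qed.

Lemma box_le_log (c W : nat) : (0 < W)%N -> (c <= n * W)%N -> expR 1 <= n%:R :> R ->
  (box (c%:R : R))%:~R <= 9 * n%:R * (ln n%:R + ln W%:R) :> R.
Proof.
move=> W_gt0 le_c_nW e_le_n.
have n_ge2 : 2 <= n%:R :> R by have := expR_ge1Dx (1 : R); lra.
have W_ge1 : 1 <= W%:R :> R by rewrite ler1n.
have ln_n_ge1 := ln_ge1 e_le_n.
have ln_W_ge0 : 0 <= ln W%:R :> R by rewrite ln_ge0.
have c_le : 1 + c%:R <= n%:R ^+ 2 * W%:R :> R.
  have : c%:R <= n%:R * W%:R :> R by rewrite -natrM ler_nat.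
  have : 1 <= n%:R * W%:R :> R by nra.
  rewrite expr2 -mulrA; nra.
have ln_le : ln (1 + c%:R) <= 2 * (ln n%:R + ln W%:R) :> R.
  apply: le_trans (_ : ln (n%:R ^+ 2 * W%:R) <= _).
    by rewrite ler_ln ?posrE ?ltr_wpDr ?ler0n //; nra.
  by rewrite lnM ?posrE ?lnXn ?exprn_gt0; lra.
have := box_lt_logd c%:R; have := @logd_le (1 + c%:R).
rewrite lerDl ler0n => /(_ isT); nra.
Qed.

End Boxes.

Section DEMO.
Variables (R : realType) (n : nat) (E : rel 'I_n) (w : 'I_n -> nat).
Hypothesis n_gt1 : (1 < n)%N.
Hypothesis w_gt0 : forall i, (0 < w i)%N.

Let n_gt0 : (0 < n)%N := ltnW n_gt1.

Local Notation Cost := (Cost w).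
Local Notation LP := (@LP R n E w).
Local Notation b1 := (@b1 R n w).
Local Notation b2 := (@b2 R n E w).
Local Notation b := (@b R n E w).
Local Notation f_le := (@f_le R n E w).
Local Notation f_neq := (@f_neq R n E w).
Local Notation discarded := (@discarded R n E w).
Local Notation demo_step := (@demo_step R n E w).
Local Notation box := (@box R n).
Local Notation trans := (@trans R n E w).
Local Notation init := (@init R n).
Local Notation q := (@q R n E w).

Definition total_weight : nat := \sum_i w i.

Lemma Cost_le_total (x : bits n) : (Cost x <= total_weight)%N.
Proof. by apply: leq_sum => i _; case: (x i); rewrite ?muln1 ?muln0. Qed.

Lemma Cost_eq0 (x : bits n) : Cost x = 0%N -> x = zero_bits n.
Proof.
move/eqP; rewrite sum_nat_eq0 => /forall_inP x_off; apply/ffunP => i.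
by have := x_off i isT; rewrite ffunE muln_eq0 gtn_eqF ?w_gt0 //= eqb0 => /negbTE.
Qed.

Lemma Cost_flip (x : bits n) i : x i -> Cost x = (Cost (flip x i) + w i)%N.
Proof.
move=> xi; rewrite /Defs.Cost (bigD1 i) //= [in RHS](bigD1 i) //= !ffunE eqxx xi.
rewrite muln1 muln0 add0n addnC; congr (_ + _)%N.
by apply: eq_bigr => j /negbTE j_neq_i; rewrite ffunE j_neq_i.
Qed.

Lemma LP_feasible1 (x : bits n) : LP_feasible E x (fun=> 1 : R).
Proof. by split=> [i _|i j _ _ _]; rewrite ?ler01 ?lexx ?lerDl. Qed.

Lemma LP_obj_ge0 (x : bits n) y : LP_feasible E x y -> 0 <= LP_obj w x y :> R.
Proof.
move=> [y_range _]; apply: sumr_ge0 => i xi.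
by rewrite mulr_ge0 ?ler0n //; case/andP: (y_range i xi).
Qed.

Lemma LP_ge0 (x : bits n) : 0 <= LP x.
Proof.
apply: lb_le_inf.
  by exists (LP_obj w x (fun=> 1)), (fun=> 1); split; first exact: LP_feasible1.
by move=> v [y [y_feas ->]]; apply: LP_obj_ge0.
Qed.

Lemma LP_le_total (x : bits n) : LP x <= total_weight%:R.
Proof.
apply: (@le_trans _ _ (LP_obj w x (fun=> 1))).
  apply: ge_inf; last by exists (fun=> 1); split; first exact: LP_feasible1.
  by exists 0 => v [y [y_feas ->]]; apply: LP_obj_ge0.
rewrite /LP_obj natr_sum [X in _ <= X](bigID (fun i => ~~ x i)) /=.
under eq_bigr do rewrite mulr1.
by rewrite lerDl sumr_ge0.
Qed.

Definition box_max : nat := `|box total_weight%:R|%N.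

Lemma box_maxE : box total_weight%:R = box_max%:Z.
Proof. by rewrite gez0_abs // box_ge0. Qed.

Lemma le_b1 (x y : bits n) : (Cost x <= Cost y)%N -> b1 x <= b1 y.
Proof. by move=> le_xy; rewrite le_box ?ler0n ?ler_nat. Qed.

Lemma le_b2 (x y : bits n) : LP x <= LP y -> b2 x <= b2 y.
Proof. exact/le_box/LP_ge0. Qed.

Lemma b1_range (x : bits n) : 0 <= b1 x <= box_max.
Proof. by rewrite box_ge0 ?ler0n // -box_maxE le_box ?ler0n ?ler_nat ?Cost_le_total. Qed.

Lemma b2_range (x : bits n) : 0 <= b2 x <= box_max.
Proof. by rewrite box_ge0 ?LP_ge0 // -box_maxE le_box ?LP_ge0 ?LP_le_total. Qed.

Definition wf_pop (P : pop n) : Prop :=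
  (0 < #|P|)%N /\ {in P &, forall y z, y != z -> b y != b z /\ ~~ f_le y z}.

Lemma survivor_incomparable (P : pop n) x' z :
  ~~ discarded P x' -> z \in P -> ~~ (f_le x' z || (b z == b x')) ->
  b z != b x' /\ ~~ f_le z x'.
Proof.
move=> kept zP; rewrite negb_or => /andP [not_x'z b_neq]; split=> //.
apply: contra not_x'z => le_zx'.
have : ~~ (f_le z x' && f_neq z x').
  by apply: contraNN kept => dominated; apply/exists_inP; exists z; rewrite ?dominated.
rewrite le_zx' /Defs.f_neq negb_or !negbK => /andP [/eqP cost_eq /eqP LP_eq].
by rewrite /Defs.f_le cost_eq LP_eq leqnn lexx.
Qed.

Lemma wf_demo_step (P : pop n) x' : wf_pop P -> wf_pop (demo_step P x').
Proof.
move=> [P_gt0 P_wf]; rewrite /Defs.demo_step; case: ifPn => [//|kept].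
split; first by apply/card_gt0P; exists x'; rewrite setU11.
move=> y z; rewrite !in_setU1 !inE.
case/predU1P => [->|/andP [yP y_kept]]; case/predU1P => [->|/andP [zP z_kept]].
- by rewrite eqxx.
- by move=> _; move: z_kept; rewrite negb_or eq_sym => /andP [not_le b_neq].
- by move=> _; exact: survivor_incomparable kept yP y_kept.
- exact: P_wf.
Qed.

(* Incomparability makes [b1] and [b2] move in opposite directions along a
   well-formed population, so the diagonal index [b1 - b2] separates its points. *)
Lemma wf_pop_diag_inj (P : pop n) :
  wf_pop P -> {in P &, injective (fun x => b1 x - b2 x)}.
Proof.
move=> [_ P_wf] x y xP yP diag_eq; apply/eqP/negPn/negP => x_neq_y.
wlog le_cost : x y xP yP diag_eq x_neq_y / (Cost x <= Cost y)%N.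
  move=> wlog_le; case: (leqP (Cost x) (Cost y)) => [|/ltnW]; first exact: wlog_le.
  by apply: wlog_le; rewrite // eq_sym.
have [b_neq not_le_xy] := P_wf x y xP yP x_neq_y.
have lt_LP : LP y < LP x by move: not_le_xy; rewrite /Defs.f_le le_cost /= -ltNge.
have := le_b1 le_cost; have := le_b2 (ltW lt_LP) => le2 le1.
have [eq1 eq2] : b1 x = b1 y /\ b2 x = b2 y by split; lia.
by move: b_neq; rewrite /Defs.b eq1 eq2 eqxx.
Qed.

Lemma card_wf_pop (P : pop n) : wf_pop P -> (#|P| <= box_max.*2.+1)%N.
Proof.
move=> P_wf.
pose idx (x : bits n) : 'I_box_max.*2.+1 := inord (absz (b1 x - b2 x + box_max%:Z)).
suff idx_inj : {in P &, injective idx}.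
  by rewrite -(card_in_imset idx_inj) (leq_trans (max_card _)) ?card_ord.
move=> x y xP yP /(congr1 (@nat_of_ord _)).
have /andP [? ?] := b1_range x; have /andP [? ?] := b1_range y.
have /andP [? ?] := b2_range x; have /andP [? ?] := b2_range y.
rewrite !inordK ?ltnS; [|lia|lia] => abs_eq.
by apply: (wf_pop_diag_inj P_wf) => //; lia.
Qed.

Definition min_cost_point (P : pop n) : bits n :=
  if [pick x in P] is Some x0 then [arg min_(y < x0 in P) Cost y] else zero_bits n.

Lemma min_cost_pointP (P : pop n) : (0 < #|P|)%N ->
  min_cost_point P \in P /\ {in P, forall y, (Cost (min_cost_point P) <= Cost y)%N}.
Proof.
rewrite /min_cost_point => /card_gt0P [x xP]; case: pickP => [x0 x0P|/(_ x)].
  by case: arg_minnP.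
by rewrite xP.
Qed.

Definition min_cost_box (P : pop n) : int := b1 (min_cost_point P).

Lemma min_cost_box_le_b1 (P : pop n) x : x \in P -> min_cost_box P <= b1 x.
Proof.
move=> xP; have /min_cost_pointP [_ min_le] : (0 < #|P|)%N by apply/card_gt0P; exists x.
exact/le_b1/min_le.
Qed.

Lemma min_cost_box_demo_step (P : pop n) x' : (0 < #|P|)%N ->
  min_cost_box (demo_step P x') <= min_cost_box P.
Proof.
move=> /min_cost_pointP [mP _]; rewrite /Defs.demo_step; case: ifPn => // kept.
set m := min_cost_point P; have [removed|m_kept] := boolP (f_le x' m || (b m == b x')).
- apply: le_trans (min_cost_box_le_b1 (setU11 _ _)) _.
  case/orP: removed => [/andP [le_cost _]|/eqP [b1_eq _]]; first exact: le_b1.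
  by rewrite /min_cost_box -/m b1_eq.
- by apply: min_cost_box_le_b1; rewrite in_setU1 inE mP m_kept orbT.
Qed.

Lemma accept_b1_lt (P : pop n) x' : {in P, forall y, b1 x' < b1 y} -> ~~ discarded P x'.
Proof.
move=> lt_P; apply/exists_inP => -[y yP].
case/orP => [/andP [/andP [le_cost _] _]|/andP [/eqP [b1_eq _] _]].
  by have := lt_P y yP; rewrite ltNge le_b1.
by have := lt_P y yP; rewrite b1_eq ltxx.
Qed.

Lemma Cost_le_heaviest (x : bits n) :
  (0 < Cost x)%N -> exists2 i, x i & (Cost x <= n * w i)%N.
Proof.
move=> Cost_gt0; have [j xj] : exists j, x j.
  apply/existsP; apply: contraLR Cost_gt0; rewrite negb_exists => /forallP x_off.
  rewrite -leqNgt leqn0 sum_nat_eq0.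
  by apply/forallP => i; rewrite (negbTE (x_off i)) muln0.
have [i xi w_max] := @arg_maxnP _ j (fun i => x i) w xj.
exists i => //; apply: (@leq_trans (\sum_(k < n) w i)).
  by apply: leq_sum => k _; case: (boolP (x k)) => [/w_max|_]; rewrite ?muln1 ?muln0.
by rewrite sum_nat_const card_ord.
Qed.

Lemma b1_flip_lt (x : bits n) i : x i -> (Cost x <= n * w i)%N -> b1 (flip x i) < b1 x.
Proof.
move=> xi le_cost; have Cost_x := Cost_flip xi.
change (box (Cost (flip x i))%:R < box (Cost x)%:R).
have -> : Cost (flip x i) = (Cost x - w i)%N by rewrite Cost_x addnK.
by apply: box_subn_lt; rewrite ?w_gt0 // Cost_x leq_addl.
Qed.

(* Flipping the heaviest selected vertex of the cheapest point lowers [b1]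
   below every [b1] in the population, so the offspring is accepted. *)
Lemma min_cost_box_flip_lt (P : pop n) : (0 < #|P|)%N -> zero_bits n \notin P ->
  exists i, min_cost_box (demo_step P (flip (min_cost_point P) i)) < min_cost_box P.
Proof.
move=> P_gt0 zero_notin; have [mP _] := min_cost_pointP P_gt0.
set m := min_cost_point P in mP *.
have Cost_gt0 : (0 < Cost m)%N.
  by rewrite lt0n; apply: contraNneq zero_notin => /Cost_eq0 <-.
have [i mi le_cost] := Cost_le_heaviest Cost_gt0; exists i.
have lt_box : b1 (flip m i) < min_cost_box P := b1_flip_lt mi le_cost.
have kept : ~~ discarded P (flip m i).
  by apply: accept_b1_lt => y yP; apply: lt_le_trans lt_box (min_cost_box_le_b1 yP).
apply: le_lt_trans lt_box; apply: min_cost_box_le_b1.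
by rewrite /Defs.demo_step (negbTE kept) setU11.
Qed.

Definition drift_scale : R := (box_max.*2.+1)%:R / single_flip_prob n.

Definition potential (P : pop n) : R := (min_cost_box P)%:~R * drift_scale.

Lemma drift_scale_ge0 : 0 <= drift_scale.
Proof. by rewrite divr_ge0 ?ler0n // ltW // (single_flip_prob_gt0 n_gt1). Qed.

Lemma potential_ge0 (P : pop n) : 0 <= potential P.
Proof.
rewrite mulr_ge0 ?drift_scale_ge0 // ler0z.
by case/andP: (b1_range (min_cost_point P)).
Qed.

Lemma potential_le (P : pop n) : potential P <= box_max%:R * drift_scale.
Proof.
apply: ler_wpM2r; first exact: drift_scale_ge0.
by rewrite pmulrn ler_int; case/andP: (b1_range (min_cost_point P)).
Qed.

Lemma potential_demo_step (P : pop n) x' : (0 < #|P|)%N ->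
  potential (demo_step P x') <= potential P.
Proof.
move=> P_gt0; apply: ler_wpM2r; first exact: drift_scale_ge0.
by rewrite ler_int min_cost_box_demo_step.
Qed.

Lemma sum_trans_potential (P : pop n) :
  \sum_P' trans P P' * potential P' =
  #|P|%:R^-1 * \sum_(x in P) \sum_x' mut_prob x x' * potential (demo_step P x').
Proof.
rewrite /Defs.trans; under eq_bigr do rewrite big_distrl /=.
rewrite exchange_big big_distrr; apply: eq_bigr => x _ /=.
under eq_bigr do rewrite -mulrA; rewrite -big_distrr; congr (_ * _).
under eq_bigr do rewrite big_distrl /=.
rewrite exchange_big; apply: eq_bigr => x' _ /=.
under eq_bigr do rewrite -mulrA; rewrite -big_distrr; congr (_ * _).
rewrite (bigD1 (demo_step P x')) //= eqxx mul1r big1 ?addr0 // => P' /negbTE neq.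
by rewrite eq_sym neq mul0r.
Qed.

Lemma potential_lt (P P' : pop n) :
  min_cost_box P' < min_cost_box P -> potential P' <= potential P - drift_scale.
Proof.
rewrite -lezD1 -(ler_int R) rmorphD rmorph1 /= => lt_box.
rewrite /potential -[X in _ - X]mul1r -mulrBl.
by apply: ler_wpM2r; [exact: drift_scale_ge0 | lra].
Qed.

Lemma single_flip_prob_drift_scale :
  single_flip_prob n * drift_scale = (box_max.*2.+1)%:R.
Proof.
by rewrite mulrC -mulrA mulVf ?mulr1 // lt0r_neq0 // (single_flip_prob_gt0 n_gt1).
Qed.

(* The cheapest point is selected with probability [1/#|P|], and then flips
   the right vertex with probability [single_flip_prob n]; the scale makes up
   for both since [#|P| <= 2 box_max + 1]. *)
Lemma potential_drift (P : pop n) : wf_pop P -> zero_bits n \notin P ->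
  \sum_P' trans P P' * potential P' <= potential P - 1.
Proof.
move=> P_wf zero_notin; have P_gt0 := P_wf.1.
have card_le := card_wf_pop P_wf.
pose G x := \sum_x' mut_prob x x' * potential (demo_step P x').
have G_le x : G x <= potential P.
  apply: average_le (mut_prob_ge0 x) (sum_mut_prob x) _ => x'.
  exact: potential_demo_step.
have [mP _] := min_cost_pointP P_gt0; set m := min_cost_point P in mP *.
have G_m : G m <= potential P - single_flip_prob n * drift_scale.
  have [i lt_box] := min_cost_box_flip_lt P_gt0 zero_notin.
  rewrite -(mut_prob_flip m i).
  apply: average_le_drop (mut_prob_ge0 m) (sum_mut_prob m) _ _ _ (potential_lt lt_box).
  move=> x'; exact: potential_demo_step.
have sum_G : \sum_(x in P) G x <= \sum_(x in P) potential P - (box_max.*2.+1)%:R.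
  rewrite -single_flip_prob_drift_scale (bigD1 m) //= [X in _ <= X - _](bigD1 m) //=.
  have : \sum_(x in P | x != m) G x <= \sum_(x in P | x != m) potential P.
    by apply: ler_sum => x _; apply: G_le.
  lra.
have card_pos : 0 < #|P|%:R :> R by rewrite ltr0n.
rewrite sum_trans_potential -(ler_pM2l card_pos) mulrA mulfV ?lt0r_neq0 // mul1r.
apply: le_trans sum_G _; rewrite sumr_const -[potential P *+ _]mulr_natl mulrBr mulr1.
by rewrite lerD2l lerN2 ler_nat.
Qed.

Lemma trans_ge0 (P P' : pop n) : 0 <= trans P P'.
Proof.
apply: sumr_ge0 => x _; rewrite mulr_ge0 ?invr_ge0 ?ler0n //.
by apply: sumr_ge0 => x' _; rewrite mulr_ge0 ?mut_prob_ge0 ?ler0n.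
Qed.

Lemma init_ge0 (P : pop n) : 0 <= init P.
Proof. by apply: sumr_ge0 => x _; rewrite mulr_ge0 ?invr_ge0 ?exprn_ge0 ?ler0n. Qed.

Lemma sum_init : \sum_(P : pop n) init P = 1.
Proof.
rewrite exchange_big /=; under eq_bigr => x _.
  rewrite -big_distrr (bigD1 [set x]%SET) //= eqxx big1 ?addr0 ?mulr1.
    over.
  by move=> P /negbTE ->.
rewrite sumr_const card_ffun card_bool card_ord -[_ *+ _]mulr_natr natrX.
by rewrite mulVf // expf_neq0.
Qed.

Lemma q_ge0 t (P : pop n) : 0 <= q t P.
Proof.
elim: t P => [|t IH] P /=; rewrite mulr_ge0 ?ler0n ?init_ge0 //.
by apply: sumr_ge0 => P0 _; rewrite mulr_ge0 ?IH ?trans_ge0.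
Qed.

Lemma q_succ_le t (P' : pop n) : q t.+1 P' <= \sum_P q t P * trans P P'.
Proof.
rewrite /= -[X in _ <= X]mul1r ler_wpM2r ?sumr_ge0 // => [P _|].
  by rewrite mulr_ge0 ?q_ge0 ?trans_ge0.
by case: (_ \notin _); rewrite ?ler01.
Qed.

Lemma init_support (P : pop n) : init P != 0 -> exists x, P = [set x]%SET.
Proof.
move/eqP/psumr_neq0P => -[x _|x /andP [_]].
  by rewrite mulr_ge0 ?ler0n ?invr_ge0 ?exprn_ge0.
by rewrite pmulr_rgt0 ?invr_gt0 ?exprn_gt0 // ltr0n lt0b => /eqP ->; exists x.
Qed.

Lemma trans_support (P P' : pop n) : trans P P' != 0 -> exists x', P' = demo_step P x'.
Proof.
move/eqP/psumr_neq0P => -[x _|x /andP [_]].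
  rewrite mulr_ge0 ?invr_ge0 ?ler0n ?sumr_ge0 // => x' _.
  by rewrite mulr_ge0 ?mut_prob_ge0 ?ler0n.
move/lt0r_neq0; rewrite mulf_eq0 negb_or => /andP [_ /eqP].
case/psumr_neq0P => [x' _|x' /andP [_]]; first by rewrite mulr_ge0 ?mut_prob_ge0 ?ler0n.
move/lt0r_neq0; rewrite mulf_eq0 negb_or pnatr_eq0 eqb0 negbK.
by case/andP => _ /eqP <-; exists x'.
Qed.

Lemma q_support t (P : pop n) : q t P != 0 -> wf_pop P /\ zero_bits n \notin P.
Proof.
elim: t P => [|t IH] P /=.
all: rewrite mulf_eq0 negb_or pnatr_eq0 eqb0 negbK => /andP [zero_notin].
  move=> /init_support [x P_eq]; subst P; split=> //; split; first by rewrite cards1.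
  by move=> y z /set1P -> /set1P ->; rewrite eqxx.
move/eqP/psumr_neq0P => -[P0 _|P0 /andP [_]]; first by rewrite mulr_ge0 ?q_ge0 ?trans_ge0.
move/lt0r_neq0; rewrite mulf_eq0 negb_or.
case/andP => q_neq0 /trans_support [x' P_eq]; subst P.
by split=> //; apply: wf_demo_step; exact: (IH _ q_neq0).1.
Qed.

Lemma expected_time_le : (expected_time E w <= (box_max%:R * drift_scale)%:E)%E.
Proof.
have drift t P : q t P != 0 -> \sum_P' trans P P' * potential P' <= potential P - 1.
  by case/q_support; apply: potential_drift.
apply: le_trans (killed_chain_series_le q_ge0 potential_ge0 q_succ_le drift) _.
rewrite lee_fin.
apply: (@le_trans _ _ (\sum_P init P * (box_max%:R * drift_scale))); last first.
  by rewrite -mulr_suml sum_init mul1r.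
apply: ler_sum => P _; apply: ler_pM; last exact: potential_le.
- exact: (q_ge0 0 P).
- exact: potential_ge0.
- rewrite /= -[X in _ <= X]mul1r; apply: ler_wpM2r; first exact: init_ge0.
  by case: (_ \notin _); rewrite ?ler01.
Qed.

Lemma potential_bound (W : nat) : (0 < W)%N -> (total_weight <= n * W)%N ->
  expR 1 <= n%:R :> R ->
  box_max%:R * drift_scale <= 171 * expR 1 * n%:R ^+ 3 * (ln n%:R + ln W%:R) ^+ 2.
Proof.
move=> W_gt0 le_total e_le_n; set A := ln n%:R + ln W%:R.
have K_le : box_max%:R <= 9 * n%:R * A.
  by have := box_le_log n_gt0 W_gt0 le_total e_le_n; rewrite box_maxE.
have nA_ge1 : 1 <= n%:R * A.
  have := ln_ge1 e_le_n.
  have : 0 <= ln W%:R :> R by rewrite ln_ge0 ?ler1n.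
  have : 2 <= n%:R :> R by rewrite ler_nat.
  rewrite /A; nra.
have inv_le : (single_flip_prob n)^-1 <= expR 1 * n%:R :> R.
  exact: single_flip_prob_inv_le n_gt1.
have inv_ge0 : 0 <= (single_flip_prob n)^-1 :> R.
  by rewrite invr_ge0 ltW ?single_flip_prob_gt0.
have K_ge0 : 0 <= box_max%:R :> R by rewrite ler0n.
rewrite /drift_scale -addn1 -muln2 natrD natrM.
apply: le_trans (_ : 9 * n%:R * A * (19 * n%:R * A * (expR 1 * n%:R)) <= _); last first.
  by rewrite le_eqVlt; apply/orP; left; apply/eqP; ring.
apply: ler_pM => //; first by rewrite mulr_ge0 //; lra.
apply: ler_pM => //; lra.
Qed.

End DEMO.

Theorem lemma7 (R : realType) :
  exists (C : R) (N : nat), forall (n : nat) (E : rel 'I_n) (w : 'I_n -> nat),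
    (N <= n)%N -> simple_graph E -> (forall i, (0 < w i)%N) ->
    (expected_time E w <=
       (C * n%:R ^+ 3 * (ln n%:R + ln (\max_(i < n) w i)%:R) ^+ 2)%:E)%E.
Proof.
exists (171 * expR 1), (maxn 2 `|Num.ceil (expR (1 : R))|%N).
move=> n E w; rewrite geq_max => /andP [n_gt1 ceil_e_le] _ w_gt0.
set W := (\max_(i < n) w i)%N.
have W_gt0 : (0 < W)%N by apply: leq_trans (w_gt0 (Ordinal (ltnW n_gt1))) (leq_bigmax _).
have total_le : (total_weight w <= n * W)%N.
  rewrite -[n in (_ <= n * _)%N]card_ord -sum_nat_const.
  by apply: leq_sum => i _; apply: leq_bigmax.
have e_le_n : expR 1 <= n%:R :> R.
  have ceil_e_ge0 : 0 <= Num.ceil (expR 1 : R).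
    by rewrite ceil_ge0 (lt_trans _ (expR_gt0 1)) ?ltrN10.
  apply: (le_trans (ceil_ge (expR (1 : R)))).
  by rewrite -(gez0_abs ceil_e_ge0) pmulrn ler_int lez_nat.
apply: le_trans (expected_time_le R E n_gt1 w_gt0) _.
rewrite lee_fin; exact: (potential_bound n_gt1 W_gt0 total_le e_le_n).
Qed.
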